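(* Let $G$ be a finite group, $D$ a Dedekind domain, $A$ a $DG$-module and $B$ a $DG$-submodule of $A$ such that: (i) $B=\bigoplus_{\lambda\in\Lambda}B_\lambda$ with each $B_\lambda$ a simple $DG$-submodule; (ii) $A/B$ is a simple $DG$-module and $A/B\not\cong_{DG}B_\lambda$ for all $\lambda\in\Lambda$; (iii) $\mathrm{Ann}_D(B)=\mathrm{Ann}_D(A/B)=P$ is a maximal ideal of $D$; (iv) $\mathrm{char}(D/P)=0$. Then there exists a $DG$-submodule $K$ of $A$ with $A=B\oplus K$. *)

From HB Require Import structures.
From Stdlib Require List.
From mathcomp Require Import all_boot fingroup all_algebra.
Set Implicit Arguments. Unset Strict Implicit. Unset Printing Implicit Defensive.
Import GRing.Theory.
Local Open Scope ring_scope.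

Definition ideal (D : comNzRingType) (I : D -> Prop) : Prop :=
  I 0 /\ (forall x y, I x -> I y -> I (x + y)) /\ (forall a x, I x -> I (a * x)).

Definition prime_ideal (D : comNzRingType) (I : D -> Prop) : Prop :=
  ideal I /\ ~ I 1 /\ (forall a b, I (a * b) -> I a \/ I b).

Definition maximal_ideal (D : comNzRingType) (I : D -> Prop) : Prop :=
  ideal I /\ ~ I 1 /\
  (forall J : D -> Prop, ideal J -> (forall x, I x -> J x) ->
     (forall x, J x -> I x) \/ J 1).

Definition noetherian_ring (D : comNzRingType) : Prop :=
  forall I : nat -> D -> Prop, (forall n, ideal (I n)) ->
    (forall n x, I n x -> I n.+1 x) ->
    exists N, forall n x, (N <= n)%N -> I n x -> I N x.

Definition integrally_closed (D : idomainType) : Prop :=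
  forall u : {fraction D}, integralOver (@tofrac D) u -> exists d : D, u = tofrac d.

Definition dedekind_domain (D : idomainType) : Prop :=
  noetherian_ring D /\ integrally_closed D /\
  (forall P : D -> Prop, prime_ideal P -> (exists x, P x /\ x <> 0) -> maximal_ideal P).

Definition dg_action (D : comNzRingType) (gT : finGroupType) (M : lmodType D)
    (rho : gT -> M -> M) : Prop :=
  (forall g (c : D) (u v : M), rho g (c *: u + v) = c *: rho g u + rho g v) /\
  (forall u, rho 1%g u = u) /\
  (forall g h u, rho (g * h)%g u = rho g (rho h u)).

Definition dg_submodule (D : comNzRingType) (gT : finGroupType) (M : lmodType D)
    (rho : gT -> M -> M) (S : M -> Prop) : Prop :=
  S 0 /\ (forall u v, S u -> S v -> S (u + v)) /\
  (forall (c : D) u, S u -> S (c *: u)) /\ (forall g u, S u -> S (rho g u)).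

Definition simple_dg_submodule (D : comNzRingType) (gT : finGroupType)
    (M : lmodType D) (rho : gT -> M -> M) (S : M -> Prop) : Prop :=
  dg_submodule rho S /\ (exists x, S x /\ x <> 0) /\
  (forall T : M -> Prop, dg_submodule rho T -> (forall x, T x -> S x) ->
     (forall x, T x -> x = 0) \/ (forall x, S x -> T x)).

Definition simple_dg_module (D : comNzRingType) (gT : finGroupType)
    (M : lmodType D) (rho : gT -> M -> M) : Prop :=
  simple_dg_submodule rho (fun _ => True).

Definition internal_direct_sum (D : comNzRingType) (M : lmodType D) (L : Type)
    (B : M -> Prop) (Bl : L -> M -> Prop) : Prop :=
  (forall x, B x <-> exists (s : seq L) (f : L -> M),
       (forall l, Bl l (f l)) /\ x = \sum_(l <- s) f l) /\
  (forall l x, Bl l x -> forall (s : seq L) (f : L -> M),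
       (forall l', List.In l' s -> l' <> l) -> (forall l', Bl l' (f l')) ->
       x = \sum_(i <- s) f i -> x = 0).

(* pi : A -> Q is a surjective DG-homomorphism with kernel B, i.e. Q is
   (a model of) the quotient DG-module A/B with projection pi. *)
Definition dg_quotient_map (D : comNzRingType) (gT : finGroupType)
    (A Q : lmodType D) (rhoA : gT -> A -> A) (rhoQ : gT -> Q -> Q)
    (B : A -> Prop) (pi : A -> Q) : Prop :=
  (forall (c : D) u v, pi (c *: u + v) = c *: pi u + pi v) /\
  (forall g u, pi (rhoA g u) = rhoQ g (pi u)) /\
  (forall q, exists u, pi u = q) /\
  (forall u, pi u = 0 <-> B u).

Definition dg_iso_onto (D : comNzRingType) (gT : finGroupType)
    (A Q : lmodType D) (rhoA : gT -> A -> A) (rhoQ : gT -> Q -> Q)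
    (S : A -> Prop) (f : A -> Q) : Prop :=
  (forall (c : D) u v, S u -> S v -> f (c *: u + v) = c *: f u + f v) /\
  (forall g u, S u -> f (rhoA g u) = rhoQ g (f u)) /\
  (forall u v, S u -> S v -> f u = f v -> u = v) /\
  (forall q, exists u, S u /\ f u = q).

Definition annihilator (D : comNzRingType) (M : lmodType D) (S : M -> Prop)
    (d : D) : Prop :=
  forall x, S x -> d *: x = 0.

(* Multiplication by [p] in [P] kills [B] and [A/B], so it maps [A] into [B]
   and factors through [A/B]; if it were nonzero, the simple module [A/B] would
   embed into [B = ⊕ B_λ] and hence be isomorphic to some [B_λ].  So [P A = 0]
   and [A], [A/B] are vector spaces over the field [D/P].  There [A/B], spanned
   by the orbit of any nonzero vector, is finite dimensional, so the projection
   has a linear section [s]; since [|G|] is invertible in [D/P] (characteristic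
   0), the average [|G|⁻¹ Σ_g g s g⁻¹] is a [DG]-section, whose image is the
   complement. *)

From HB Require Import structures.
From mathcomp Require Import all_boot fingroup all_algebra.
From Stdlib Require Import Classical ClassicalEpsilon.
Import GRing.Theory.
Local Open Scope ring_scope.
Set Implicit Arguments. Unset Strict Implicit. Unset Printing Implicit Defensive.

Section LinearMaps.
Variables (D : comNzRingType) (M N : lmodType D) (f : M -> N).
Hypothesis f_lin : linear f.
HB.instance Definition _ := GRing.isLinear.Build D M N *:%R f f_lin.

Lemma lin0 : f 0 = 0. Proof. exact: linear0. Qed.
Lemma linD u v : f (u + v) = f u + f v. Proof. exact: linearD. Qed.
Lemma linZ c u : f (c *: u) = c *: f u. Proof. exact: linearZ. Qed.
Lemma linB u v : f (u - v) = f u - f v. Proof. exact: linearB. Qed.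
Lemma lin_sum (I : finType) (F : I -> M) : f (\sum_i F i) = \sum_i f (F i).
Proof. exact: linear_sum. Qed.

End LinearMaps.

Definition dg_hom (D : comNzRingType) (gT : finGroupType) (M N : lmodType D)
    (rhoM : gT -> M -> M) (rhoN : gT -> N -> N) (f : M -> N) : Prop :=
  linear f /\ forall g x, f (rhoM g x) = rhoN g (f x).

Definition annihilates (D : comNzRingType) (P : D -> Prop) (M : lmodType D) :=
  forall d, P d -> forall m : M, d *: m = 0.

Section MaximalIdeal.
Variables (D : comNzRingType) (P : D -> Prop).
Hypothesis Pmax : maximal_ideal P.

Lemma maximal_ideal_inv_mod c : ~ P c -> exists d, P (1 - d * c).
Proof.
have [[P0 [PD PM]] [_ Pmaximal]] := Pmax => Pc.
pose J x := exists d, P (x - d * c).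
have J_ideal : ideal J.
  split; first by exists 0; rewrite mul0r subr0.
  split=> [x y [d Pd] [e Pe] | a x [d Pd]].
    by exists (d + e); rewrite mulrDl opprD addrACA; apply: PD.
  by exists (a * d); rewrite -mulrA -mulrBr; apply: PM.
have PJ x : P x -> J x by exists 0; rewrite mul0r subr0.
case: (Pmaximal J J_ideal PJ) => [JP|//].
by case: Pc; apply: JP; exists 1; rewrite mul1r subrr.
Qed.

Lemma annihilates_scale_inv (M : lmodType D) c :
  annihilates P M -> ~ P c -> exists d, forall m : M, d *: (c *: m) = m.
Proof.
move=> PM /maximal_ideal_inv_mod [d Pd]; exists d => m.
rewrite scalerA; have -> : d * c = 1 - (1 - d * c) by rewrite opprB addrC subrK.
by rewrite scalerBl scale1r PM // subr0.
Qed.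

End MaximalIdeal.

Fixpoint span (D : comNzRingType) (M : lmodType D) (ws : seq M) (u : M) : Prop :=
  if ws is w :: ws' then exists (c : D) v, span ws' v /\ u = c *: w + v else u = 0.

Section Span.
Variables (D : comNzRingType) (M : lmodType D).
Implicit Types (ws : seq M) (u v w : M).

Lemma span0 ws : span ws 0.
Proof. by elim: ws => [|w ws IH] //=; exists 0, 0; rewrite scale0r addr0. Qed.

Lemma spanD ws u v : span ws u -> span ws v -> span ws (u + v).
Proof.
elim: ws u v => [|w ws IH] u v /=; first by move=> -> ->; rewrite addr0.
move=> [c [u' [Hu ->]]] [d [v' [Hv ->]]]; exists (c + d), (u' + v').
by split; [exact: IH | rewrite scalerDl addrACA].
Qed.

Lemma spanZ ws c u : span ws u -> span ws (c *: u).
Proof.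
elim: ws u => [|w ws IH] u /=; first by move=> ->; rewrite scaler0.
move=> [d [u' [Hu ->]]]; exists (c * d), (c *: u').
by split; [exact: IH | rewrite scalerDr scalerA].
Qed.

Lemma spanB ws u v : span ws u -> span ws v -> span ws (u - v).
Proof. by move=> Hu Hv; rewrite -scaleN1r; apply/spanD/spanZ. Qed.

Lemma span_mem ws w : w \in ws -> span ws w.
Proof.
elim: ws => [|w' ws IH] //=; rewrite inE => /orP [/eqP ->|/IH Hw].
  by exists 1, 0; rewrite scale1r addr0; split; first exact: span0.
by exists 0, w; rewrite scale0r add0r.
Qed.

Lemma span_cons ws w u : span ws w -> span (w :: ws) u -> span ws u.
Proof. by move=> Hw [c [v [Hv ->]]]; apply/spanD/Hv/spanZ. Qed.

Lemma span_cons_coord_unique (P : D -> Prop) ws w c c' v v' :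
  maximal_ideal P -> annihilates P M -> ~ span ws w -> span ws v -> span ws v' ->
  c *: w + v = c' *: w + v' -> P (c - c') /\ v = v'.
Proof.
move=> Pmax PM w_span Hv Hv' E.
have Ecoord : (c - c') *: w = v' - v.
  have -> : v' = c *: w + v - c' *: w by rewrite E addrC addKr.
  by rewrite scalerBl addrAC addrK.
have Pc : P (c - c').
  apply: NNPP => /(annihilates_scale_inv Pmax PM) [d Hd]; apply: w_span.
  by rewrite -(Hd w) Ecoord; apply/spanZ/spanB.
split=> //; apply/eqP.
by rewrite -subr_eq0 -opprB -Ecoord PM // oppr0.
Qed.

End Span.

Lemma span_linear_image (D : comNzRingType) (M N : lmodType D) (f : M -> N)
    (ws : seq M) (ws' : seq N) u :
  linear f -> {in ws, forall w, span ws' (f w)} -> span ws u -> span ws' (f u).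
Proof.
move=> f_lin; elim: ws u => [|w ws IH] u f_ws /=.
  by move=> ->; rewrite lin0 //; exact: span0.
move=> [c [v [Hv ->]]]; rewrite f_lin; apply/spanD/IH => //.
  by apply/spanZ/f_ws; rewrite inE eqxx.
by move=> w' Hw'; apply: f_ws; rewrite inE Hw' orbT.
Qed.

Section LinearSection.
Variables (D : comNzRingType) (P : D -> Prop) (A Q : lmodType D) (pi : A -> Q).
Hypotheses (Pmax : maximal_ideal P) (PA : annihilates P A) (PQ : annihilates P Q).
Hypotheses (pi_lin : linear pi) (pi_surj : forall q, exists a, pi a = q).

Definition section_on (ws : seq Q) (s : Q -> A) :=
  (forall c u v, span ws u -> span ws v -> s (c *: u + v) = c *: s u + s v) /\
  (forall u, span ws u -> pi (s u) = u).

Lemma section_on_cons (ws : seq Q) w s :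
  section_on ws s -> exists s', section_on (w :: ws) s'.
Proof.
move=> [s_lin s_sec]; case: (classic (span ws w)) => [w_span | w_span].
  have sub u : span (w :: ws) u -> span ws u := span_cons w_span.
  by exists s; split=> [c u v /sub Hu /sub Hv | u /sub Hu]; [exact: s_lin | exact: s_sec].
(* Send [c w + v] to [c aw + s v] for a lift [aw] of [w]: [c] is only determined
   modulo [P], which kills [A]. *)
have [aw Eaw] := pi_surj w; subst w.
have [coord coordP] : exists coord : Q -> D * Q, forall u, span (pi aw :: ws) u ->
    span ws (coord u).2 /\ u = (coord u).1 *: pi aw + (coord u).2.
  apply: (choice (fun u cv => span _ u -> span ws cv.2 /\ u = cv.1 *: _ + cv.2)) => u.
  case: (classic (span (pi aw :: ws) u)) => [[c [v [Hv E]]]|Nu]; last by exists (0, 0).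
  by exists (c, v).
pose s' u := (coord u).1 *: aw + s (coord u).2.
have s'E c v : span ws v -> s' (c *: pi aw + v) = c *: aw + s v.
  move=> Hv; have Hu : span (pi aw :: ws) (c *: pi aw + v) by exists c, v.
  have [Hv' E] := coordP _ Hu.
  have [Pc Ev] := span_cons_coord_unique Pmax PQ w_span Hv' Hv (esym E).
  by rewrite /s' Ev; congr (_ + _); apply/eqP; rewrite -subr_eq0 -scalerBl PA.
exists s'; split=> [c _ _ [c1 [v1 [Hv1 ->]]] [c2 [v2 [Hv2 ->]]]|_ [c [v [Hv ->]]]].
  have -> : c *: (c1 *: pi aw + v1) + (c2 *: pi aw + v2) =
            (c * c1 + c2) *: pi aw + (c *: v1 + v2).
    by rewrite scalerDr scalerDl scalerA addrACA.
  rewrite !s'E ?s_lin //; last by apply/spanD/Hv2/spanZ.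
  by rewrite scalerDr scalerDl scalerA addrACA.
by rewrite s'E // pi_lin s_sec.
Qed.

Lemma linear_section (ws : seq Q) : (forall q, span ws q) ->
  exists s, linear s /\ forall q, pi (s q) = q.
Proof.
have [s [s_lin s_sec]] : exists s, section_on ws s.
  elim: ws => [|w ws [s Hs]]; last exact: section_on_cons Hs.
  exists (fun=> 0); split=> [c u v _ _|u /= ->]; first by rewrite scaler0 addr0.
  by rewrite lin0.
by move=> ws_span; exists s; split=> [c u v|q]; [exact: s_lin | exact: s_sec].
Qed.

End LinearSection.

Section SimpleModules.
Variables (D : comNzRingType) (gT : finGroupType) (M : lmodType D).
Variable rho : gT -> M -> M.

Lemma simple_dg_submodule_fill (S T : M -> Prop) x :
  simple_dg_submodule rho S -> dg_submodule rho T -> (forall y, T y -> S y) ->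
  T x -> x <> 0 -> forall y, S y -> T y.
Proof. by move=> [_ [_ S_simple]] T_sub TS Tx x0; case: (S_simple T) => // /(_ x Tx). Qed.

Lemma simple_dg_module_fill (T : M -> Prop) x :
  simple_dg_module rho -> dg_submodule rho T -> T x -> x <> 0 -> forall y, T y.
Proof.
move=> M_simple T_sub Tx x0 y.
by apply: (simple_dg_submodule_fill M_simple T_sub _ Tx x0).
Qed.

Lemma dg_submoduleB (S : M -> Prop) u v :
  dg_submodule rho S -> S u -> S v -> S (u - v).
Proof. by move=> [_ [SD [SZ _]]] Su Sv; rewrite -scaleN1r; apply/SD/SZ. Qed.

Lemma dg_submodule_kernel (N : lmodType D) (rhoN : gT -> N -> N) (f : M -> N) :
  dg_action rhoN -> dg_hom rho rhoN f -> dg_submodule rho (fun x => f x = 0).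
Proof.
move=> [rhoN_lin _] [f_lin f_rho]; split; first exact: lin0.
split; first by move=> u v fu fv; rewrite linD // fu fv addr0.
split; first by move=> c u fu; rewrite linZ // fu scaler0.
by move=> g u fu; rewrite f_rho fu (lin0 (rhoN_lin g)).
Qed.

Lemma dg_submodule_preimage (N : lmodType D) (rhoN : gT -> N -> N) (f : M -> N)
    (S : N -> Prop) :
  dg_hom rho rhoN f -> dg_submodule rhoN S -> dg_submodule rho (fun x => S (f x)).
Proof.
move=> [f_lin f_rho] [S0 [SD [SZ Srho]]]; split; first by rewrite lin0.
split; first by move=> u v Su Sv; rewrite linD //; apply: SD.
split; first by move=> c u Su; rewrite linZ //; apply: SZ.
by move=> g u Su; rewrite f_rho; apply: Srho.
Qed.

Lemma simple_dg_hom_kernel (N : lmodType D) (rhoN : gT -> N -> N) (f : M -> N) :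
  simple_dg_module rho -> dg_action rhoN -> dg_hom rho rhoN f ->
  (forall x, f x = 0) \/ (forall x, f x = 0 -> x = 0).
Proof.
move=> [_ [_ M_simple]] actN f_hom.
case: (M_simple _ (dg_submodule_kernel actN f_hom) (fun _ _ => I)) => [ker0|ker_full].
  by right.
by left=> x; apply: ker_full.
Qed.

End SimpleModules.

Lemma dg_quotient_factor (D : comNzRingType) (gT : finGroupType) (A Q N : lmodType D)
    (rhoA : gT -> A -> A) (rhoQ : gT -> Q -> Q) (rhoN : gT -> N -> N)
    (B : A -> Prop) (pi : A -> Q) (psi : A -> N) :
  dg_quotient_map rhoA rhoQ B pi -> dg_hom rhoA rhoN psi -> (forall b, B b -> psi b = 0) ->
  exists phi, dg_hom rhoQ rhoN phi /\ forall a, phi (pi a) = psi a.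
Proof.
move=> [pi_lin [pi_rho [pi_surj pi_ker]]] [psi_lin psi_rho] psiB.
have [lift liftK] := choice (fun q a => pi a = q) pi_surj.
have psi_lift a : psi (lift (pi a)) = psi a.
  apply/eqP; rewrite -subr_eq0 -linB //; apply/eqP/psiB/pi_ker.
  by rewrite linB // liftK subrr.
exists (fun q => psi (lift q)); split=> //; split=> [c q q'|g q].
  by rewrite -[q]liftK -[q']liftK -pi_lin !psi_lift psi_lin.
by rewrite -[q]liftK -pi_rho !psi_lift psi_rho.
Qed.

(* Unlike in [internal_direct_sum], an index may occur several times in [s],
   with different summands. *)
Fixpoint sum_of (D : comNzRingType) (M : lmodType D) (L : Type)
    (Bl : L -> M -> Prop) (s : seq L) (x : M) : Prop :=
  if s is l :: s' then exists b c, Bl l b /\ sum_of Bl s' c /\ x = b + c else x = 0.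

Lemma eq_big_In (R : Type) (idx : R) (op : R -> R -> R) (I : Type) (s : seq I)
    (F G : I -> R) :
  (forall i, List.In i s -> F i = G i) ->
  \big[op/idx]_(i <- s) F i = \big[op/idx]_(i <- s) G i.
Proof.
elim: s => [|i s IH] FG; first by rewrite !big_nil.
by rewrite !big_cons FG ?IH //=; [move=> j js; apply: FG; right | left].
Qed.

Section ComponentSums.
Variables (D : comNzRingType) (gT : finGroupType) (M : lmodType D) (rho : gT -> M -> M).
Variables (L : Type) (Bl : L -> M -> Prop).
Hypothesis Bl_sub : forall l, dg_submodule rho (Bl l).

Lemma sum_of_dg_submodule s : dg_action rho -> dg_submodule rho (sum_of Bl s).
Proof.
move=> [rho_lin _]; elim: s => [|l s [C0 [CD [CZ Crho]]]] /=.
  split=> //; split; first by move=> u v -> ->; rewrite addr0.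
  split; first by move=> c u ->; rewrite scaler0.
  by move=> g u ->; rewrite (lin0 (rho_lin g)).
have [B0 [BD [BZ Brho]]] := Bl_sub l.
split; first by exists 0, 0; rewrite addr0.
split.
  move=> _ _ [b [c [Hb [Hc ->]]]] [b' [c' [Hb' [Hc' ->]]]].
  by exists (b + b'), (c + c'); rewrite addrACA; auto.
split.
  move=> d _ [b [c [Hb [Hc ->]]]].
  by exists (d *: b), (d *: c); rewrite scalerDr; auto.
move=> g _ [b [c [Hb [Hc ->]]]].
by exists (rho g b), (rho g c); rewrite (linD (rho_lin g)); auto.
Qed.

Lemma sum_of_absorb s l b c :
  List.In l s -> Bl l b -> sum_of Bl s c -> sum_of Bl s (b + c).
Proof.
elim: s c => [|l' s IH] c //= [-> | ls] Hb [b' [c' [Hb' [Hc' ->]]]].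
  have [_ [BD _]] := Bl_sub l.
  by exists (b + b'), c'; rewrite addrA; auto.
by exists b', (b + c'); rewrite addrCA; auto.
Qed.

Lemma sum_of_big s (f : L -> M) :
  (forall l, Bl l (f l)) -> sum_of Bl s (\sum_(l <- s) f l).
Proof.
move=> Hf; elim: s => [|l s IH]; first by rewrite big_nil.
by rewrite big_cons; exists (f l), (\sum_(i <- s) f i).
Qed.

Lemma sum_of_bigP s x : sum_of Bl s x -> exists s' (f : L -> M),
  (forall l, List.In l s' -> List.In l s) /\ (forall l, Bl l (f l)) /\
  x = \sum_(l <- s') f l.
Proof.
elim: s x => [|l s IH] x /=.
  move=> ->; exists [::], (fun=> 0); rewrite big_nil.
  by split=> //; split=> // l; have [] := Bl_sub l.
move=> [b [c [Hb [Hc ->]]]].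
case: (classic (List.In l s)) => ls.
  have [s' [f [s's [Hf ->]]]] := IH _ (sum_of_absorb ls Hb Hc).
  by exists s', f; split=> // i /s's; right.
have [s' [f [s's [Hf ->]]]] := IH _ Hc.
pose f' i := if excluded_middle_informative (i = l) then b else f i.
exists (l :: s'), f'; split; first by move=> i /= [->|/s's]; auto.
split.
  by move=> i; rewrite /f'; case: excluded_middle_informative => // il; subst i.
rewrite big_cons; have -> : f' l = b by rewrite /f'; case: excluded_middle_informative.
congr (_ + _).
apply: eq_big_In => i /s's i_s; rewrite /f'.
by case: excluded_middle_informative => // il; case: ls; rewrite -il.
Qed.

Lemma direct_sum_indep (B : M -> Prop) s l x : internal_direct_sum B Bl ->
  ~ List.In l s -> Bl l x -> sum_of Bl s x -> x = 0.
Proof.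
move=> [_ Bl_indep] ls Hx /sum_of_bigP [s' [f [s's [Hf Ex]]]].
by apply: (Bl_indep l x Hx s' f) => // i /s's i_s il; case: ls; rewrite -il.
Qed.

Lemma direct_sum_sum_of (B : M -> Prop) x :
  internal_direct_sum B Bl -> B x -> exists s, sum_of Bl s x.
Proof. by move=> [BP _] /BP [s [f [Hf ->]]]; exists s; exact: sum_of_big. Qed.

End ComponentSums.

Section EmbeddingIntoDirectSum.
Variables (D : comNzRingType) (gT : finGroupType) (A Q : lmodType D).
Variables (rhoA : gT -> A -> A) (rhoQ : gT -> Q -> Q) (phi : Q -> A).
Hypotheses (actA : dg_action rhoA) (phi_hom : dg_hom rhoQ rhoA phi).

Lemma dg_projection_surj (S C : A -> Prop) :
  simple_dg_submodule rhoA S -> dg_submodule rhoA C -> (forall q, C (phi q) -> q = 0) ->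
  (forall q, exists b c, S b /\ C c /\ phi q = b + c) -> (exists q : Q, q <> 0) ->
  forall b, S b -> exists q, C (phi q - b).
Proof.
move=> S_simple C_sub phiC cover [q0 q00].
have [[S0 [SD [SZ Srho]]] _] := S_simple.
have [C0 [CD [CZ Crho]]] := C_sub.
have [phi_lin phi_rho] := phi_hom.
have [rhoA_lin _] := actA.
pose T b := S b /\ exists q, C (phi q - b).
have T_sub : dg_submodule rhoA T.
  split; first by split=> //; exists 0; rewrite lin0 // subr0.
  split.
    move=> u v [Su [q Cq]] [Sv [q' Cq']]; split; first exact: SD.
    by exists (q + q'); rewrite linD // opprD addrACA; apply: CD.
  split.
    move=> c u [Su [q Cq]]; split; first exact: SZ.
    by exists (c *: q); rewrite linZ // -scalerBr; apply: CZ.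
  move=> g u [Su [q Cq]]; split; first exact: Srho.
  by exists (rhoQ g q); rewrite phi_rho -(linB (rhoA_lin g)); apply: Crho.
have [b0 [c0 [Sb0 [Cc0 E0]]]] := cover q0.
have Tb0 : T b0 by split=> //; exists q0; rewrite E0 addrC addKr.
have b00 : b0 <> 0 by move=> b00; apply/q00/phiC; rewrite E0 b00 add0r.
move=> b Sb; have T_S x (Tx : T x) : S x := proj1 Tx.
by have [] := simple_dg_submodule_fill S_simple T_sub T_S Tb0 b00 Sb.
Qed.

(* [f b] is the unique [q] with [phi q - b] in [C]. *)
Lemma dg_iso_onto_of_projection (S C : A -> Prop) :
  dg_submodule rhoA S -> dg_submodule rhoA C ->
  (forall x, S x -> C x -> x = 0) -> (forall q, C (phi q) -> q = 0) ->
  (forall q, exists b c, S b /\ C c /\ phi q = b + c) ->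
  (forall b, S b -> exists q, C (phi q - b)) ->
  exists f, dg_iso_onto rhoA rhoQ S f.
Proof.
move=> S_sub C_sub SC0 phiC cover proj_surj.
have [_ [SD [SZ Srho]]] := S_sub; have [_ [CD [CZ Crho]]] := C_sub.
have [phi_lin phi_rho] := phi_hom; have [rhoA_lin _] := actA.
have [f fP] : exists f : A -> Q, forall b, S b -> C (phi (f b) - b).
  apply: (choice (fun b q => S b -> C (phi q - b))) => b.
  by case: (classic (S b)) => [/proj_surj [q Cq] | NSb]; [exists q | exists 0].
have fE b q : S b -> C (phi q - b) -> f b = q.
  move=> Sb Cq; apply/eqP; rewrite -subr_eq0; apply/eqP/phiC.
  have -> : phi (f b - q) = (phi (f b) - b) - (phi q - b).
    by rewrite linB // opprB addrA subrK.
  exact: dg_submoduleB C_sub (fP b Sb) Cq.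
exists f; split.
  move=> c u v Su Sv; apply: fE; first by apply/SD/Sv/SZ.
  have -> : phi (c *: f u + f v) - (c *: u + v) = c *: (phi (f u) - u) + (phi (f v) - v).
    by rewrite phi_lin scalerBr opprD addrACA.
  by apply/CD/fP/Sv/CZ/fP.
split.
  move=> g u Su; apply: fE; first exact: Srho.
  by rewrite phi_rho -(linB (rhoA_lin g)); apply/Crho/fP.
split.
  move=> u v Su Sv Euv; apply/eqP; rewrite -subr_eq0; apply/eqP/SC0.
    exact: dg_submoduleB S_sub Su Sv.
  have -> : u - v = (phi (f v) - v) - (phi (f u) - u).
    by rewrite Euv opprB [RHS]addrC addrA subrK.
  exact: dg_submoduleB C_sub (fP v Sv) (fP u Su).
move=> q; have [b [c [Sb [Cc Eq]]]] := cover q.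
by exists b; split=> //; apply: fE; rewrite // Eq addrC addKr.
Qed.

Lemma simple_embedding_into_direct_sum (L : Type) (B : A -> Prop) (Bl : L -> A -> Prop) :
  simple_dg_module rhoQ -> (forall l, simple_dg_submodule rhoA (Bl l)) ->
  internal_direct_sum B Bl -> (forall q, phi q = 0 -> q = 0) -> (forall q, B (phi q)) ->
  exists l f, dg_iso_onto rhoA rhoQ (Bl l) f.
Proof.
move=> Q_simple Bl_simple B_sum phi_inj phiB.
have Bl_sub l : dg_submodule rhoA (Bl l) by case: (Bl_simple l).
have [_ [[q0 [_ q00]] _]] := Q_simple.
have [s0 Hs0] := direct_sum_sum_of B_sum (phiB q0).
(* Induction on a list of components whose sum meets the image of [phi]: a
   shortest one gives a component [Bl l] that meets the sum of the others
   trivially, and projecting onto it along that sum is an isomorphism. *)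
suff IHs : forall s, (exists q, q <> 0 /\ sum_of Bl s (phi q)) ->
  exists l f, dg_iso_onto rhoA rhoQ (Bl l) f by apply: (IHs s0); exists q0.
elim=> [|l s IH] [q [q0' Hq]]; first by case: q0'; apply: phi_inj.
case: (classic (exists q, q <> 0 /\ sum_of Bl s (phi q))) => [/IH // | Ns].
have phi_s q' : sum_of Bl s (phi q') -> q' = 0.
  by move=> Hq'; apply: NNPP => q'0; apply: Ns; exists q'.
case: (classic (List.In l s)) => ls.
  case: q0'; apply: phi_s; move: Hq => /= [b [c [Hb [Hc ->]]]].
  exact: (sum_of_absorb Bl_sub ls Hb Hc).
have indep x : Bl l x -> sum_of Bl s x -> x = 0 by exact: direct_sum_indep B_sum ls.
have cover q' : sum_of Bl (l :: s) (phi q').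
  have T_sub := dg_submodule_preimage phi_hom (sum_of_dg_submodule Bl_sub (l :: s) actA).
  exact: simple_dg_module_fill Q_simple T_sub Hq q0' q'.
have C_sub := sum_of_dg_submodule Bl_sub s actA.
have proj_surj := dg_projection_surj (Bl_simple l) C_sub phi_s cover (ex_intro _ q q0').
have [f f_iso] := dg_iso_onto_of_projection (Bl_sub l) C_sub indep phi_s cover proj_surj.
by exists l, f.
Qed.

End EmbeddingIntoDirectSum.

Lemma sub_quotient_annihilator (D : comNzRingType) (gT : finGroupType) (A Q : lmodType D)
    (rhoA : gT -> A -> A) (rhoQ : gT -> Q -> Q) (L : Type) (B : A -> Prop)
    (Bl : L -> A -> Prop) (pi : A -> Q) (p : D) :
  dg_action rhoA -> (forall l, simple_dg_submodule rhoA (Bl l)) ->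
  internal_direct_sum B Bl -> dg_quotient_map rhoA rhoQ B pi -> simple_dg_module rhoQ ->
  (forall l, ~ exists f, dg_iso_onto rhoA rhoQ (Bl l) f) ->
  (forall b, B b -> p *: b = 0) -> (forall q : Q, p *: q = 0) -> forall a : A, p *: a = 0.
Proof.
move=> actA Bl_simple B_sum quo Q_simple Bl_not_iso pB pQ.
have [pi_lin [_ [pi_surj pi_ker]]] := quo.
have [rhoA_lin _] := actA.
have scale_hom : dg_hom rhoA rhoA ( *:%R p).
  split=> [c u v | g u]; first by rewrite /= scalerDr !scalerA mulrC.
  by rewrite /= (linZ (rhoA_lin g)).
have [phi [phi_hom phiE]] := dg_quotient_factor quo scale_hom pB.
case: (simple_dg_hom_kernel Q_simple actA phi_hom) => [phi0 a | phi_inj].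
  by rewrite -phiE phi0.
have phiB q : B (phi q).
  by have [a <-] := pi_surj q; rewrite phiE; apply/pi_ker; rewrite linZ // pQ.
have [l [f f_iso]] := simple_embedding_into_direct_sum actA phi_hom Q_simple Bl_simple
  B_sum phi_inj phiB.
by case: (Bl_not_iso l); exists f.
Qed.

Lemma simple_dg_module_orbit_span (D : comNzRingType) (gT : finGroupType) (Q : lmodType D)
    (rhoQ : gT -> Q -> Q) :
  dg_action rhoQ -> simple_dg_module rhoQ -> exists ws : seq Q, forall q, span ws q.
Proof.
move=> [rhoQ_lin [rhoQ1 rhoQM]] Q_simple; have [_ [[q0 [_ q00]] _]] := Q_simple.
pose ws := [seq rhoQ h q0 | h <- enum gT].
have orbit_ws h : rhoQ h q0 \in ws by apply: map_f; rewrite mem_enum.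
have span_sub : dg_submodule rhoQ (span ws).
  split; first exact: span0.
  split; first by move=> u v; apply: spanD.
  split; first by move=> c u; apply: spanZ.
  move=> g u; apply: span_linear_image (rhoQ_lin g) _ => _ /mapP [h _ ->].
  by rewrite -rhoQM; apply/span_mem/orbit_ws.
exists ws; apply: simple_dg_module_fill Q_simple span_sub _ q00.
by rewrite -(rhoQ1 q0); apply/span_mem/orbit_ws.
Qed.

Section Averaging.
Variables (D : comNzRingType) (gT : finGroupType) (A Q : lmodType D).
Variables (rhoA : gT -> A -> A) (rhoQ : gT -> Q -> Q) (pi : A -> Q) (s : Q -> A) (d : D).
Hypotheses (actA : dg_action rhoA) (actQ : dg_action rhoQ) (pi_hom : dg_hom rhoA rhoQ pi).
Hypotheses (s_lin : linear s) (s_sec : forall q, pi (s q) = q).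
Hypothesis d_inv : forall q : Q, d *: (#|gT|%:R *: q) = q.

Definition average (q : Q) : A := d *: \sum_(g : gT) rhoA g (s (rhoQ g^-1 q)).

Lemma average_dg_hom : dg_hom rhoQ rhoA average.
Proof.
have [rhoA_lin [_ rhoAM]] := actA; have [rhoQ_lin [_ rhoQM]] := actQ.
split=> [c u v | h q]; rewrite /average.
  rewrite scalerA mulrC -scalerA -scalerDr; congr (_ *: _).
  rewrite scaler_sumr -big_split; apply: eq_bigr => g _.
  by rewrite rhoQ_lin s_lin rhoA_lin.
rewrite (linZ (rhoA_lin h)) (lin_sum (rhoA_lin h)); congr (_ *: _).
rewrite (reindex_inj (mulgI h)) /=; apply: eq_bigr => g _.
by rewrite -rhoQM -rhoAM invMg -mulgA mulVg mulg1.
Qed.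

Lemma average_section q : pi (average q) = q.
Proof.
have [_ [rhoQ1 rhoQM]] := actQ; have [pi_lin pi_rho] := pi_hom.
rewrite /average linZ // lin_sum //.
under eq_bigr => g _ do rewrite pi_rho s_sec -rhoQM mulgV rhoQ1.
by rewrite sumr_const -scaler_nat d_inv.
Qed.

End Averaging.

Lemma dg_section_complement (D : comNzRingType) (gT : finGroupType) (A Q : lmodType D)
    (rhoA : gT -> A -> A) (rhoQ : gT -> Q -> Q) (B : A -> Prop) (pi : A -> Q)
    (s : Q -> A) :
  dg_quotient_map rhoA rhoQ B pi -> dg_hom rhoQ rhoA s -> (forall q, pi (s q) = q) ->
  exists K : A -> Prop, dg_submodule rhoA K /\
    (forall x, B x -> K x -> x = 0) /\
    (forall a, exists b k, B b /\ K k /\ a = b + k).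
Proof.
move=> [pi_lin [_ [_ pi_ker]]] [s_lin s_rho] s_sec.
exists (fun a => exists q, a = s q); split.
  split; first by exists 0; rewrite lin0.
  split; first by move=> _ _ [u ->] [v ->]; exists (u + v); rewrite linD.
  split; first by move=> c _ [u ->]; exists (c *: u); rewrite linZ.
  by move=> g _ [u ->]; exists (rhoQ g u); rewrite s_rho.
split; first by move=> x /pi_ker Bx [q Eq]; rewrite Eq s_sec in Bx; rewrite Eq Bx lin0.
move=> a; exists (a - s (pi a)), (s (pi a)); split.
  by apply/pi_ker; rewrite linB // s_sec subrr.
by split; [exists (pi a) | rewrite subrK].
Qed.

Unset Implicit Arguments.

Theorem lemma7 (gT : finGroupType) (D : idomainType) (A : lmodType D)
    (rhoA : gT -> A -> A) (B : A -> Prop) (L : Type) (Bl : L -> A -> Prop)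
    (Q : lmodType D) (rhoQ : gT -> Q -> Q) (pi : A -> Q) (P : D -> Prop) :
  dedekind_domain D ->
  dg_action rhoA ->
  dg_submodule rhoA B ->
  (* (i) *)
  (forall l, simple_dg_submodule rhoA (Bl l)) ->
  internal_direct_sum B Bl ->
  (* (ii): Q with projection pi is the quotient A/B *)
  dg_action rhoQ ->
  dg_quotient_map rhoA rhoQ B pi ->
  simple_dg_module rhoQ ->
  (forall l, ~ exists f : A -> Q, dg_iso_onto rhoA rhoQ (Bl l) f) ->
  (* (iii) *)
  (forall d, annihilator B d <-> P d) ->
  (forall d, annihilator (fun _ : Q => True) d <-> P d) ->
  maximal_ideal P ->
  (* (iv) char(D/P) = 0 *)
  (forall n : nat, (0 < n)%N -> ~ P (n%:R)) ->
  exists K : A -> Prop, dg_submodule rhoA K /\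
    (forall x, B x -> K x -> x = 0) /\
    (forall a, exists b k, B b /\ K k /\ a = b + k).
Proof.
move=> _ actA _ Bl_simple B_sum actQ quo Q_simple Bl_not_iso AnnB AnnQ Pmax Pchar.
have [pi_lin [pi_rho [pi_surj _]]] := quo.
have PQ : annihilates P Q by move=> p /AnnQ pQ q; exact: pQ.
have PA : annihilates P A.
  move=> p Pp; exact: sub_quotient_annihilator actA Bl_simple B_sum quo Q_simple Bl_not_iso
    ((AnnB p).2 Pp) (PQ p Pp).
have [ws ws_span] := simple_dg_module_orbit_span actQ Q_simple.
have [s [s_lin s_sec]] := linear_section Pmax PA PQ pi_lin pi_surj ws_span.
have gT_pos : (0 < #|gT|)%N by rewrite -cardsT cardG_gt0.
have [d d_inv] := annihilates_scale_inv Pmax PQ (Pchar _ gT_pos).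
have pi_hom : dg_hom rhoA rhoQ pi by split.
exact: dg_section_complement quo (average_dg_hom d actA actQ s_lin)
  (average_section actQ pi_hom s_sec d_inv).
Qed.
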